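(* Let $k\ge 1$ and $n=2^{k+1}-1$, and let $\Delta=3$, so that $T_{n,3}$ is the complete binary tree of height $k$ with all levels full. Then in every execution of the traversal procedure on $T_{n,3}$, the number of jump edges added in step (c) (not counting the final closing edge $\{v_n,1\}$) is the same, namely $$\sum_{i=0}^{k-1} f(i)+k=\frac{f(k+1)}{2}=\Bigl\lfloor \frac{n}{3}\Bigr\rfloor,$$ where $f$ is the function defined by $f(0)=0$ and $f(m)=2(m-1)+2\sum_{i=0}^{m-2}f(i)$ for $m\ge 1$.
   Context: Fix integers $\Delta\ge 3$ and $n\ge 3$, and put $b=\Delta-1$. The complete $\Delta$-ary tree $T_{n,\Delta}$ is the rooted tree on vertex set $\{1,\dots,n\}$ with root $1$ in which the children of a vertex $i$ are the integers $j$ with $b(i-1)+2\le j\le bi+1$ and $j\le n$ (equivalently, the parent of $j\ge 2$ is $\lfloor (j-2)/b\rfloor+1$). Thus every vertex has at most $\Delta-1$ children, all levels except possibly the last are full, and the last level is filled from the left. A leaf is a vertex other than the root having no children. Traversal procedure: start with edge set $E$ equal to the edge set of $T_{n,\Delta}$, all vertices unmarked, and $v_1=1$. For $k=1,\dots,n-1$: mark $v_k$; then (a) if $v_k\neq 1$ and the parent of $v_k$ is unmarked, let $v_{k+1}$ be the parent of $v_k$; (b) otherwise, if $v_k$ has an unmarked child, let $v_{k+1}$ be any unmarked child of $v_k$; (c) otherwise, let $v_{k+1}$ be any unmarked leaf $u$ and add the edge $\{v_k,u\}$ to $E$ (a ''jump edge''). Finally mark $v_n$ and add the edge $\{v_n,1\}$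 to $E$ (if not already present). The output is the simple graph $G=(\{1,\dots,n\},E)$. An execution is any run of this procedure, i.e. any admissible sequence of choices in (b) and (c). *)

From mathcomp Require Import all_boot.
Set Implicit Arguments. Unset Strict Implicit. Unset Printing Implicit Defensive.

(* Complete Delta-ary tree T_{n,Delta} on vertex set {1,...,n}, root 1,
   b = Delta - 1. *)
Definition branch (Delta : nat) : nat := Delta - 1.

Definition parent (Delta j : nat) : nat := (j - 2) %/ branch Delta + 1.

Definition is_vertex (n v : nat) : bool := (1 <= v <= n).

Definition is_child (Delta n i j : nat) : bool :=
  [&& branch Delta * (i - 1) + 2 <= j, j <= branch Delta * i + 1 & j <= n].

Definition is_leaf (Delta n v : nat) : bool :=
  [&& is_vertex n v, v != 1 & ~~ has (is_child Delta n v) (iota 1 n)].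

(* Case (a) applies at current vertex v with marked set `marked`
   (marked already contains v). *)
Definition case_a (Delta : nat) (marked : seq nat) (v : nat) : bool :=
  (v != 1) && (parent Delta v \notin marked).

Definition has_unmarked_child (Delta n : nat) (marked : seq nat) (v : nat) : bool :=
  has (fun c => is_child Delta n v c && (c \notin marked)) (iota 1 n).

Definition step_ok (Delta n : nat) (marked : seq nat) (v w : nat) : bool :=
  if case_a Delta marked v then w == parent Delta v
  else if has_unmarked_child Delta n marked v then
    is_child Delta n v w && (w \notin marked)
  else is_leaf Delta n w && (w \notin marked).

Definition is_jump_step (Delta n : nat) (marked : seq nat) (v : nat) : bool :=
  ~~ case_a Delta marked v && ~~ has_unmarked_child Delta n marked v.

(* An execution is the visiting sequence vs = [:: v_1; ...; v_n]
   (0-indexed: nth 0 vs k = v_{k+1}).  At step k+1 (0-indexed k < n-1)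
   the marked vertices are v_1..v_{k+1} = take k.+1 vs. *)
Definition is_execution (Delta n : nat) (vs : seq nat) : Prop :=
  [/\ size vs = n, nth 0 vs 0 = 1 &
      forall k, k < n.-1 ->
        step_ok Delta n (take k.+1 vs) (nth 0 vs k) (nth 0 vs k.+1)].

Definition num_jumps (Delta n : nat) (vs : seq nat) : nat :=
  count (fun k => is_jump_step Delta n (take k.+1 vs) (nth 0 vs k)) (iota 0 n.-1).

From mathcomp Require Import all_boot zify.
Set Implicit Arguments. Unset Strict Implicit. Unset Printing Implicit Defensive.

(* For Delta = 3 the parent of j is j/2 and the children of i are 2i and
   2i+1; the subtree below a vertex x is complete, of height
   h(x) = k - floor(log2 x).  Let J(0) = 0, J(h+1) = 2 J(h) + [h even] and
   C(h) = J(h) + [h even].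

   The proof is an amortization argument.  In a partial execution with
   marked set M and current vertex v, let Phi(M) be the sum of C(h(x)) over
   the unmarked x whose parent is marked (the roots of the untouched
   subtrees), and let c(M, v) be an amount determined by which of the cases
   (a), (b), (c) applies at v.  Every step keeps
       Phi(M) + (jumps so far) = J(k) + c(M, v),
   and at the end Phi = c = 0, so every execution makes J(k) jumps.  J(k) is
   then identified with the three expressions of the theorem by induction. *)

Definition even_ind (h : nat) : nat := ~~ odd h.

Lemma even_indS (h : nat) : even_ind h.+1 + even_ind h = 1.
Proof. by rewrite /even_ind /=; case: (odd h). Qed.

(* [jumps h] is the number of jump edges of any execution on a complete
   binary tree of height h: J(0) = 0 and J(h+1) = 2 J(h) + [h even]. *)
Fixpoint jumps (h : nat) : nat :=
  if h is h'.+1 then 2 * jumps h' + even_ind h' else 0.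

(* [entry_cost h] is the number of jumps charged to an untouched complete
   subtree of height h that hangs below a marked vertex. *)
Definition entry_cost (h : nat) : nat := jumps h + even_ind h.

Lemma jumpsS (h : nat) : jumps h.+1 = jumps h + entry_cost h.
Proof. rewrite /entry_cost /=; lia. Qed.

Lemma entry_costS (h : nat) : entry_cost h.+1 = 2 * jumps h + 1.
Proof. have := even_indS h; rewrite /entry_cost /=; lia. Qed.

Lemma entry_cost_gt0 (h : nat) : 0 < entry_cost h.
Proof. by case: h => [|h] //; rewrite entry_costS addn1. Qed.

Lemma jumps_sum_f (f : nat -> nat) :
  f 0 = 0 ->
  (forall m, 1 <= m -> f m = 2 * (m - 1) + 2 * \sum_(0 <= i < m - 1) f i) ->
  forall h, entry_cost h = f h + 1 /\ jumps h = \sum_(0 <= i < h) f i + h.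
Proof.
move=> f0 fS; elim=> [|h [IHc IHj]]; first by rewrite f0 big_geq.
have Jh : jumps h.+1 = \sum_(0 <= i < h.+1) f i + h.+1.
  by rewrite jumpsS big_nat_recr //= IHc IHj; lia.
by split=> //; rewrite entry_costS fS // subn1 /= IHj; lia.
Qed.

Lemma jumps_closed (h : nat) : 3 * jumps h + even_ind h = 2 ^ h.+1 - 1.
Proof.
elim: h => [|h IH] //.
have := even_indS h; have := expn_gt0 2 h; move: IH.
rewrite !expnS (_ : jumps h.+1 = 2 * jumps h + even_ind h) //; lia.
Qed.

Lemma sum_point_mass (G : nat -> nat) (y a m : nat) :
  \sum_(x <- iota a m) (if x == y then G x else 0) =
  if a <= y < a + m then G y else 0.
Proof.
elim: m a => [|m IH] a; first by rewrite big_nil; case: ifP => //; lia.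
rewrite /= big_cons IH.
case: eqP => [<-|ne]; case: ifP; case: ifP => //; try lia; by rewrite addn0.
Qed.

Lemma uniq_covers_range (s : seq nat) (n : nat) : uniq s -> size s = n ->
  (forall y, y \in s -> 1 <= y <= n) -> forall x, 1 <= x <= n -> x \in s.
Proof.
move=> s_uniq s_size s_range.
have sub : {subset s <= iota 1 n} by move=> y /s_range; rewrite mem_iota; lia.
have size_le : size (iota 1 n) <= size s by rewrite size_iota s_size.
have [_ s_eq] := uniq_min_size s_uniq sub size_le.
by move=> x x_range; rewrite s_eq mem_iota; lia.
Qed.

Lemma parent3 (j : nat) : 2 <= j -> parent 3 j = j %/ 2.
Proof. rewrite /parent /branch /=; lia. Qed.

Lemma is_child3 (n i j : nat) : 1 <= i ->
  is_child 3 n i j = [&& 2 * i <= j, j <= 2 * i + 1 & j <= n].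
Proof.
move=> i1; rewrite /is_child /branch /=.
by rewrite (_ : 2 * (i - 1) + 2 = 2 * i) ?addn1 //; lia.
Qed.

Lemma case_a3 (M : seq nat) (v : nat) : 2 <= v -> case_a 3 M v = (v %/ 2 \notin M).
Proof. by move=> v2; rewrite /case_a parent3 // (_ : v != 1) //; lia. Qed.

Lemma has_unmarked_child3 (n : nat) (M : seq nat) (v : nat) : 1 <= v ->
  has_unmarked_child 3 n M v =
  ((2 * v <= n) && (2 * v \notin M)) || ((2 * v + 1 <= n) && (2 * v + 1 \notin M)).
Proof.
move=> v1; apply/hasP/orP.
  move=> [c _] /andP[]; rewrite is_child3 // => /and3P[c1 c2 cn] cM.
  have [e|e] : c = 2 * v \/ c = 2 * v + 1 by lia.
  - by left; rewrite -e cn.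
  - by right; rewrite -e cn.
move=> [/andP[cn cM] | /andP[cn cM]]; [exists (2 * v) | exists (2 * v + 1)];
  rewrite ?mem_iota ?is_child3 ?cM ?andbT //; lia.
Qed.

Lemma is_leaf3 (n w : nat) : is_leaf 3 n w -> [/\ 2 <= w, w <= n & n < 2 * w].
Proof.
move=> /and3P[/andP[w1 wn] /eqP w_not1 no_child]; split => //; first lia.
rewrite ltnNge; apply: contra no_child => w_inner; apply/hasP; exists (2 * w).
  by rewrite mem_iota; lia.
by rewrite is_child3 //; lia.
Qed.

(* The potential of a marked set M: every unmarked vertex x whose parent is
   marked is the root of an untouched subtree and contributes [weight x]. *)
Section Potential.
Variables (n : nat) (weight : nat -> nat).

Definition frontier_weight (M : seq nat) (x : nat) : nat :=
  if (x \notin M) && (x %/ 2 \in M) then weight x else 0.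

Definition potential (M : seq nat) : nat :=
  \sum_(x <- iota 2 n.-1) frontier_weight M x.

Definition child_weight (M : seq nat) (x : nat) : nat :=
  if (x <= n) && (x \notin M) then weight x else 0.

(* Marking w removes w from the frontier and adds its unmarked children. *)
Lemma frontier_weight_rcons (M : seq nat) (w x : nat) :
  w \notin M -> 2 <= x <= n ->
  frontier_weight (rcons M w) x + (if x == w then frontier_weight M x else 0) =
  frontier_weight M x + (if x == 2 * w then child_weight (rcons M w) x else 0)
                      + (if x == 2 * w + 1 then child_weight (rcons M w) x else 0).
Proof.
move=> wM /andP[x2 xn].
rewrite /frontier_weight /child_weight !mem_rcons !in_cons xn.
have [-> | xw] := eqVneq x w.
  by rewrite /= !if_same add0n !addn0.
have [xw2 | xw2] := eqVneq (x %/ 2) w.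
  rewrite xw2 (negbTE wM) /= andbT andbF add0n addn0.
  have [-> | ->] : x = 2 * w \/ x = 2 * w + 1 by lia.
  - by rewrite eqxx (_ : (2 * w == 2 * w + 1) = false) ?addn0 //; lia.
  - by rewrite eqxx (_ : (2 * w + 1 == 2 * w) = false) //; lia.
have [/negbTE -> /negbTE ->] : x != 2 * w /\ x != 2 * w + 1 by lia.
by rewrite /= !addn0.
Qed.

Lemma potential_rcons (M : seq nat) (w : nat) :
  1 <= w <= n -> w \notin M -> 0 \notin M ->
  potential (rcons M w) + frontier_weight M w =
  potential M + child_weight (rcons M w) (2 * w) + child_weight (rcons M w) (2 * w + 1).
Proof.
move=> w1n wM M0.
(* Each correction term is a point mass in the sum over the vertices 2..n. *)
have point (G : nat -> nat) y : 1 <= y -> (y = 1 -> G y = 0) -> (n < y -> G y = 0) ->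
    G y = \sum_(x <- iota 2 n.-1) (if x == y then G x else 0).
  move=> y1 G1 Gn; rewrite sum_point_mass; case: ifP => // /negbT.
  case: (ltnP n y) => [/Gn -> // | yn yout].
  by rewrite G1 //; move: yout; lia.
have child_out x : n < x -> child_weight (rcons M w) x = 0.
  by move=> xn; rewrite /child_weight leqNgt xn.
have w_pt : frontier_weight M w =
    \sum_(x <- iota 2 n.-1) (if x == w then frontier_weight M x else 0).
  apply: point; first lia.
  - by move=> ->; rewrite /frontier_weight (negbTE M0) andbF.
  - by move=> wn; lia.
rewrite w_pt (point (child_weight (rcons M w)) (2 * w));
  [ | lia | lia | exact: child_out].
rewrite (point (child_weight (rcons M w)) (2 * w + 1));
  [ | lia | lia | exact: child_out].
rewrite /potential -!big_split /=; apply: eq_big_seq => x.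
by rewrite mem_iota => xr; rewrite frontier_weight_rcons //; lia.
Qed.

Lemma potential_all_marked (M : seq nat) :
  (forall x, 1 <= x <= n -> x \in M) -> potential M = 0.
Proof.
move=> allM; rewrite /potential big1_seq // => x /andP[_].
by rewrite mem_iota /frontier_weight => xr; rewrite allM //; lia.
Qed.

End Potential.

Section CompleteBinaryTree.
Variables k n : nat.
Hypothesis n_def : n = 2 ^ k.+1 - 1.

Definition height (x : nat) : nat := k - trunc_log 2 x.

Lemma height_root : height 1 = k.
Proof. by rewrite /height trunc_log1 subn0. Qed.

Lemma height_children (w : nat) : 1 <= w ->
  height (2 * w) = (height w).-1 /\ height (2 * w + 1) = (height w).-1.
Proof.
move=> w1; rewrite /height; split; first by rewrite mul2n trunc_log2_double //; lia.
rewrite trunc_log2S; last lia.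
by rewrite (_ : (2 * w + 1)./2 = w); [lia | rewrite -divn2; lia].
Qed.

Lemma height_pos (w : nat) : 1 <= w -> (0 < height w) = (2 * w <= n).
Proof.
move=> w1; rewrite /height n_def expnS.
have below := trunc_log_ltn w (isT : 1 < 2).
have above := trunc_logP (isT : 1 < 2) w1.
have pos := expn_gt0 2 k.
apply/idP/idP => h.
  have : 2 ^ (trunc_log 2 w).+1 <= 2 ^ k by rewrite leq_exp2l //; lia.
  lia.
have : 2 ^ trunc_log 2 w < 2 ^ k by lia.
rewrite ltn_exp2l //; lia.
Qed.

Lemma n_ge3 : 1 <= k -> 3 <= n.
Proof.
move=> k1; have : 2 <= 2 ^ k by rewrite -{1}(expn1 2) leq_exp2l.
by rewrite n_def expnS; lia.
Qed.

(* Since n is odd, a vertex has either both children or none. *)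
Lemma children_in_tree (v : nat) : (2 * v <= n) = (2 * v + 1 <= n).
Proof. rewrite n_def expnS; have pos := expn_gt0 2 k; apply/idP/idP; lia. Qed.

Definition weight (x : nat) : nat := entry_cost (height x).

Local Notation Phi := (potential n weight).

Lemma has_unmarked_child_weight (M : seq nat) (w : nat) : 1 <= w ->
  has_unmarked_child 3 n M w =
  (0 < child_weight n weight M (2 * w) + child_weight n weight M (2 * w + 1)).
Proof.
move=> w1; rewrite has_unmarked_child3 // /child_weight.
have := entry_cost_gt0 (height (2 * w)); have := entry_cost_gt0 (height (2 * w + 1)).
rewrite /weight; do 2 case: ifP => _; lia.
Qed.

Lemma child_weights_unmarked (M : seq nat) (w : nat) : 1 <= w ->
  2 * w \notin M -> 2 * w + 1 \notin M ->
  child_weight n weight M (2 * w) + child_weight n weight M (2 * w + 1) =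
  if 2 * w <= n then 2 * entry_cost (height w).-1 else 0.
Proof.
move=> w1 c1 c2; have [h1 h2] := height_children w1.
rewrite /child_weight /weight c1 c2 !andbT -children_in_tree h1 h2.
by case: ifP => //; lia.
Qed.

(* The amount c(M, v) owed by the current position: it depends on which
   of the cases (a), (b), (c) applies at v. *)
Definition position_cost (M : seq nat) (v : nat) : nat :=
  if case_a 3 M v then (jumps (height v)).+1
  else if has_unmarked_child 3 n M v then even_ind (height v).-1
  else 0.

(* Every marked vertex other than the root and the current vertex v has a
   marked parent: the marked set is a subtree grown from 1, except at v. *)
Definition closed_except (M : seq nat) (v : nat) : Prop :=
  forall y, y \in M -> y != 1 -> y != v -> y %/ 2 \in M.

Lemma closed_except_unmarked (M : seq nat) (v c : nat) :
  closed_except M v -> 2 <= c -> c != v -> c %/ 2 \notin M -> c \notin M.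
Proof.
move=> Mclosed c2 cv; apply: contra => cM; apply: Mclosed => //; lia.
Qed.

Lemma closed_except_rcons (M : seq nat) (v w : nat) :
  closed_except M v -> (v != 1 -> v %/ 2 \in rcons M w) ->
  closed_except (rcons M w) w.
Proof.
move=> Mclosed vup y; rewrite mem_rcons in_cons => /orP[/eqP -> | yM] y1 yw.
  by rewrite eqxx in yw.
have [yv | yv] := eqVneq y v; first by subst y; apply: vup.
by rewrite mem_rcons in_cons Mclosed ?orbT.
Qed.

Section Steps.
Variables (M : seq nat) (v : nat).
Hypotheses (root_marked : 1 \in M) (v_marked : v \in M)
  (M_range : forall y, y \in M -> 1 <= y <= n) (M_closed : closed_except M v).

Let zero_unmarked : 0 \notin M.
Proof. by apply/negP => /M_range. Qed.

Let v_range : 1 <= v <= n.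
Proof. exact: M_range. Qed.

(* Case (a): moving up to the unmarked parent p of v, whose other child is
   still untouched. *)
Lemma ascent_potential : case_a 3 M v ->
  Phi (rcons M (v %/ 2)) + position_cost M v =
  Phi M + position_cost (rcons M (v %/ 2)) (v %/ 2).
Proof.
move=> up.
have v2 : 2 <= v by move: up; rewrite /case_a; case: eqVneq => //= v_ne1 _; lia.
rewrite /position_cost {1}up; move: up; rewrite case_a3 //.
move def_p : (v %/ 2) => p pM.
have p2 : 2 <= p.
  have : p != 1 by apply: contraNneq pM => ->.
  lia.
have p1 : 1 <= p by lia.
have [h1 h2] := height_children p1.
have hp : height p = (height v).+1.
  have : 0 < height p by rewrite height_pos //; lia.
  have [->|->] : v = 2 * p \/ v = 2 * p + 1 by lia.
  - by rewrite h1; lia.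
  - by rewrite h2; lia.
have sibling : child_weight n weight (rcons M p) (2 * p) +
               child_weight n weight (rcons M p) (2 * p + 1) = weight v.
  have other c : c %/ 2 = p -> c != v -> c \notin rcons M p.
    move=> cp cv; rewrite mem_rcons in_cons negb_or.
    by rewrite (closed_except_unmarked M_closed) ?cp ?andbT //; lia.
  have pn : 2 * p <= n by lia.
  rewrite /child_weight /weight h1 h2 hp /= -children_in_tree pn.
  have v_in : v \in rcons M p by rewrite mem_rcons in_cons v_marked orbT.
  have [e|e] : v = 2 * p \/ v = 2 * p + 1 by lia.
  - by rewrite -e v_in other //; lia.
  - by rewrite -e v_in other ?addn0 //; lia.
have p_range : 1 <= p <= n by lia.
have := potential_rcons weight p_range pM zero_unmarked.
rewrite -addnA sibling /frontier_weight pM /= => pot.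
have p_ne : (p %/ 2 == p) = false by lia.
rewrite case_a3 // mem_rcons in_cons p_ne /=.
have wp : weight p = 2 * jumps (height v) + 1 by rewrite /weight hp entry_costS.
have wv : weight v = jumps (height v) + even_ind (height v) by [].
case: (p %/ 2 \in M) pot => /= pot.
  rewrite has_unmarked_child_weight // sibling entry_cost_gt0 hp succnK.
  by move: pot; rewrite wp wv; lia.
by move: pot; rewrite hp jumpsS wv /entry_cost; lia.
Qed.

(* Case (b): moving down to an unmarked child w of v; the children of w are
   untouched. *)
Lemma descent_potential (w : nat) :
  ~~ case_a 3 M v -> has_unmarked_child 3 n M v -> is_child 3 n v w -> w \notin M ->
  Phi (rcons M w) + position_cost M v = Phi M + position_cost (rcons M w) w.
Proof.
move=> not_up down vw wM; have v1 : 1 <= v by lia.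
move: vw; rewrite is_child3 // => /and3P[w_lo w_hi wn].
have wv : w %/ 2 = v by lia.
have hw : height w = (height v).-1.
  have [h1 h2] := height_children v1.
  by have [->|->] : w = 2 * v \/ w = 2 * v + 1 by lia.
have grandchild c : c %/ 2 = w -> c \notin rcons M w.
  move=> cw; rewrite mem_rcons in_cons negb_or.
  by rewrite (closed_except_unmarked M_closed) ?cw ?andbT //; lia.
have [c1 c2] : 2 * w \notin rcons M w /\ 2 * w + 1 \notin rcons M w.
  by split; apply: grandchild; lia.
have w1 : 1 <= w by lia.
have w_range : 1 <= w <= n by lia.
have := potential_rcons weight w_range wM zero_unmarked.
rewrite -addnA child_weights_unmarked // /frontier_weight wM wv v_marked /=.
rewrite /position_cost (negbTE not_up) down case_a3; last lia.
have v_ne : (v == w) = false by lia.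
rewrite mem_rcons in_cons wv v_ne v_marked /=.
rewrite has_unmarked_child3; last lia.
rewrite c1 c2 !andbT -children_in_tree orbb -height_pos // -hw.
have ww : weight w = entry_cost (height w) by [].
rewrite ww; case: (height w) => [|m] /=; first by [].
by have := even_indS m; rewrite entry_costS /entry_cost; lia.
Qed.

Lemma jump_potential (w : nat) : is_leaf 3 n w -> w \notin M ->
  Phi (rcons M w) + 1 = Phi M + position_cost (rcons M w) w.
Proof.
move=> /is_leaf3[w2 wn leaf] wM.
have w_range : 1 <= w <= n by lia.
have no_kids : (2 * w <= n) = false by rewrite (leqNgt (2 * w)) leaf.
have h0 : height w = 0.
  by apply/eqP; rewrite -leqn0 leqNgt height_pos ?no_kids //; lia.
have := potential_rcons weight w_range wM zero_unmarked.
rewrite /child_weight -children_in_tree no_kids /= !addn0.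
have w_ne : (w %/ 2 == w) = false by lia.
rewrite /position_cost case_a3 // mem_rcons in_cons w_ne /=.
rewrite has_unmarked_child3 -?children_in_tree ?no_kids /=; last lia.
have ww : weight w = 1 by rewrite /weight h0.
rewrite /frontier_weight wM ww h0.
by case: (w %/ 2 \in M) => /=; lia.
Qed.

Lemma step_invariant (w : nat) : step_ok 3 n M v w ->
  [/\ w \notin M, 1 <= w <= n, closed_except (rcons M w) w &
      Phi (rcons M w) + is_jump_step 3 n M v + position_cost M v =
      Phi M + position_cost (rcons M w) w].
Proof.
rewrite /step_ok /is_jump_step; case up: (case_a 3 M v) => /=.
  have v2 : 2 <= v by move: up; rewrite /case_a; case: eqVneq => //= v_ne1 _; lia.
  rewrite parent3 // => /eqP ->.
  have pM : v %/ 2 \notin M by rewrite -case_a3.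
  split => //; first lia.
    by apply: closed_except_rcons M_closed _ => _; rewrite mem_rcons mem_head.
  by rewrite addn0 ascent_potential.
have v_up : v != 1 -> v %/ 2 \in rcons M w.
  move=> v_ne1; have v2 : 2 <= v by lia.
  move: up; rewrite case_a3 // => /negbFE pv.
  by rewrite mem_rcons in_cons pv orbT.
case down: (has_unmarked_child 3 n M v) => /andP[vw wM].
  split => //; last by rewrite addn0 (descent_potential (negbT up) down).
  - by move: vw; rewrite is_child3 //; lia.
  - exact: closed_except_rcons M_closed v_up.
have [w2 wn _] := is_leaf3 vw.
split => //.
- lia.
- exact: closed_except_rcons M_closed v_up.
- by rewrite /position_cost up down addn0 jump_potential.
Qed.

End Steps.

Lemma position_cost_all_marked (M : seq nat) (v : nat) : 1 <= v <= n ->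
  (forall x, 1 <= x <= n -> x \in M) -> position_cost M v = 0.
Proof.
move=> v_range all_marked; rewrite /position_cost.
have -> : case_a 3 M v = false.
  rewrite /case_a; case: eqVneq => //= v_ne1.
  by rewrite parent3 ?all_marked //; lia.
rewrite has_unmarked_child3; last lia.
case: (leqP (2 * v) n) => [kids | no_kids].
  have k1 : 2 * v \in M by apply: all_marked; lia.
  have k2 : 2 * v + 1 \in M by apply: all_marked; rewrite -children_in_tree; lia.
  by rewrite k1 k2 !andbF.
by rewrite -children_in_tree (leqNgt (2 * v)) no_kids.
Qed.

Lemma initial_potential : 1 <= k ->
  Phi [:: 1] = jumps k + position_cost [:: 1] 1.
Proof.
move=> k1; have n3 := n_ge3 k1.
have empty : Phi [::] = 0 by rewrite /potential big1_seq.
have one_range : 1 <= 1 <= n by lia.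
have := potential_rcons weight one_range (isT : 1 \notin [::]) (isT : 0 \notin [::]).
have n2 : (2 * 1 <= n) = true by lia.
rewrite -addnA child_weights_unmarked // empty (_ : frontier_weight weight [::] 1 = 0) //.
rewrite addn0 add0n n2 height_root => ->.
rewrite /position_cost /case_a /= has_unmarked_child3 // n2 height_root /=.
have [m km] : exists m, k = m.+1 by exists k.-1; lia.
by rewrite km /= /entry_cost; lia.
Qed.

Definition jumps_before (vs : seq nat) (t : nat) : nat :=
  count (fun j => is_jump_step 3 n (take j.+1 vs) (nth 0 vs j)) (iota 0 t).

Lemma jumps_before_S (vs : seq nat) (t : nat) :
  jumps_before vs t.+1 = jumps_before vs t + is_jump_step 3 n (take t.+1 vs) (nth 0 vs t).
Proof. by rewrite /jumps_before -{1}[t.+1]addn1 iotaD count_cat /= add0n addn0. Qed.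

Lemma execution_invariant (vs : seq nat) : 1 <= k -> is_execution 3 n vs ->
  forall t, t <= n.-1 ->
  [/\ uniq (take t.+1 vs), 1 \in take t.+1 vs, nth 0 vs t \in take t.+1 vs,
      forall y, y \in take t.+1 vs -> 1 <= y <= n &
      closed_except (take t.+1 vs) (nth 0 vs t) /\
      Phi (take t.+1 vs) + jumps_before vs t =
      jumps k + position_cost (take t.+1 vs) (nth 0 vs t)].
Proof.
move=> k1 [size_vs vs0 steps]; elim=> [_ | t IH t_lt].
  have first : take 1 vs = [:: 1].
    by rewrite (take_nth 0) ?take0 ?vs0 // size_vs; have := n_ge3 k1; lia.
  rewrite first vs0 mem_head; split => //.
  - by move=> y; rewrite inE => /eqP ->; have := n_ge3 k1; lia.
  - split; first by move=> y; rewrite inE => /eqP ->; rewrite eqxx.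
    by rewrite addn0 initial_potential.
have [uniq_M root_M v_M M_range [M_closed inv]] := IH (ltnW t_lt).
have t_size : t.+1 < size vs by rewrite size_vs; lia.
have := step_invariant root_M v_M M_range M_closed (steps t (leq_trans t_lt (leqnn _))).
move=> -[wM w_range w_closed pot].
rewrite (take_nth 0 t_size) rcons_uniq wM uniq_M; split => //.
- by rewrite mem_rcons in_cons root_M orbT.
- by rewrite mem_rcons mem_head.
- by move=> y; rewrite mem_rcons in_cons => /orP[/eqP -> // | /M_range].
- by split => //; move: pot; rewrite jumps_before_S; lia.
Qed.

Lemma num_jumps_execution (vs : seq nat) : 1 <= k -> is_execution 3 n vs ->
  num_jumps 3 n vs = jumps k.
Proof.
move=> k1 exec; have [size_vs _ _] := exec.
have [uniq_vs _ current_in vs_range [_ inv]] := execution_invariant k1 exec (leqnn n.-1).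
have n1 : 0 < n by have := n_ge3 k1; lia.
rewrite prednK ?take_oversize ?size_vs // in uniq_vs current_in vs_range inv.
have all_marked := uniq_covers_range uniq_vs size_vs vs_range.
rewrite potential_all_marked // position_cost_all_marked // ?vs_range // in inv.
by rewrite /num_jumps -/(jumps_before vs n.-1) addn0 in inv *; rewrite -inv.
Qed.

End CompleteBinaryTree.

Theorem mainTheorem5 (k n : nat) (f : nat -> nat)
    (hk : 1 <= k) (hn : n = 2 ^ k.+1 - 1)
    (hf0 : f 0 = 0)
    (hfS : forall m, 1 <= m -> f m = 2 * (m - 1) + 2 * \sum_(0 <= i < m - 1) f i) :
  forall vs : seq nat, is_execution 3 n vs ->
    [/\ num_jumps 3 n vs = \sum_(0 <= i < k) f i + k,
        2 * num_jumps 3 n vs = f k.+1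
      & num_jumps 3 n vs = n %/ 3].
Proof.
move=> vs exec; rewrite (num_jumps_execution hn hk exec).
have [_ jumps_f] := jumps_sum_f hf0 hfS k.
have [cost_f _] := jumps_sum_f hf0 hfS k.+1.
have closed_form := jumps_closed k.
have parity : even_ind k <= 1 by rewrite /even_ind; case: odd.
split => //; first by move: cost_f; rewrite entry_costS; lia.
by rewrite hn -closed_form; lia.
Qed.
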